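(* Let $N$ be a positive integer, $\alpha>1$, and suppose $(L_1,\ldots,L_K)\in\mathrm{TFF}(\alpha,N)$. Let $\tilde N=\sum_{i=1}^K L_i-N$ and $\tilde\alpha=\alpha/(\alpha-1)=\alpha N/\tilde N$. Then $(L_1,\ldots,L_K)\in\mathrm{TFF}(\tilde\alpha,\tilde N)$.
   Context: For a positive integer $N$, $\mathrm{TFF}(\alpha,N)$ is the set of weakly decreasing sequences of positive integers $(L_1,\ldots,L_K)$ such that there exist orthogonal projections $P_1,\ldots,P_K$ on $\mathbb{R}^N$ with $\operatorname{rank}P_i=L_i$ and $\sum_{i=1}^K P_i=\alpha\mathbf I$ (necessarily $\alpha=\sum_i L_i/N$). *)

From HB Require Import structures.
From mathcomp Require Import all_boot all_order all_algebra.
From mathcomp Require Import reals.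
Set Implicit Arguments. Unset Strict Implicit. Unset Printing Implicit Defensive.
Import Order.TTheory GRing.Theory Num.Theory.
Local Open Scope ring_scope.

Definition orth_proj (R : realType) (N : nat) (P : 'M[R]_N) : Prop :=
  P^T = P /\ P *m P = P.

Definition TFF (R : realType) (alpha : R) (N : nat) (L : seq nat) : Prop :=
  sorted geq L /\ all (fun l => 0 < l)%N L /\
  exists P : 'I_(size L) -> 'M[R]_N,
    (forall i : 'I_(size L), orth_proj (P i) /\ \rank (P i) = nth 0%N L i) /\
    \sum_(i < size L) P i = alpha%:M.

From HB Require Import structures.
From mathcomp Require Import all_boot all_order all_algebra.
From mathcomp Require Import reals ring.
Import Order.TTheory GRing.Theory Num.Theory.
Local Open Scope ring_scope.

Set Implicit Arguments. Unset Strict Implicit. Unset Printing Implicit Defensive.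

(* Write each projection as P_i = Q_i^T Q_i with Q_i
   having orthonormal rows, and stack the Q_i into A, so that A^T A = alpha I.
   Then F = I - A A^T / alpha is an orthogonal projection of rank
   sum_i L_i - N; factor it as F = B^T B with B B^T = I.  If E_i is the
   coordinate projection onto the i-th block of rows, E_i A A^T E_i = E_i, so
   E_i F E_i = (1 - 1/alpha) E_i and the compressions
   alpha/(alpha - 1) B E_i B^T are orthogonal projections of rank L_i summing
   to alpha/(alpha - 1) I. *)

Section RowOrthonormal.
Variable R : rcfType.

Lemma mul_row_tr_gt0 n (w : 'rV[R]_n) : w != 0 -> 0 < (w *m w^T) 0 0.
Proof.
have sq_ge0 j : 0 <= w 0 j ^+ 2 by exact: sqr_ge0.
have -> : (w *m w^T) 0 0 = \sum_j w 0 j ^+ 2.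
  by rewrite mxE; apply: eq_bigr => j _; rewrite mxE expr2.
move=> wN0; rewrite lt_def sumr_ge0 // andbT.
apply: contra wN0 => /eqP sum0; apply/eqP/rowP => j.
by rewrite mxE; apply/eqP; rewrite -sqrf_eq0 (psumr_eq0P _ sum0).
Qed.

Lemma row_orthonormal_cons r n (a : 'rV[R]_n) (Q : 'M[R]_(r, n)) :
  Q *m Q^T = 1%:M ->
  exists r' (Q' : 'M[R]_(r', n)), Q' *m Q'^T = 1%:M /\ (Q' :=: col_mx a Q)%MS.
Proof.
move=> QQ; pose w := a - a *m Q^T *m Q.
have wQ : w *m Q^T = 0 by rewrite /w mulmxBl -!mulmxA QQ mulmx1 subrr.
have aE : a = w + a *m Q^T *m Q by rewrite /w subrK.
have [w0|wN0] := eqVneq w 0.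
  exists r, Q; split => //; apply/eqmxP; rewrite -addsmxE addsmxSr /=.
  by rewrite col_mx_sub submx_refl andbT aE w0 add0r submxMl.
pose s := (w *m w^T) 0 0; have s_gt0 : 0 < s := mul_row_tr_gt0 wN0.
have sqrt_neq0 : Num.sqrt s != 0 by rewrite gt_eqF ?sqrtr_gt0.
pose u := (Num.sqrt s)^-1 *: w.
have uu : u *m u^T = 1%:M.
  rewrite /u linearZ /= -scalemxAl -scalemxAr scalerA (mx11_scalar (w *m w^T)).
  by rewrite -/s scale_scalar_mx -invfM -expr2 sqr_sqrtr ?ltW // mulVf ?gt_eqF.
have uQ : u *m Q^T = 0 by rewrite /u -scalemxAl wQ scaler0.
exists (1 + r)%N, (col_mx u Q); split.
  rewrite tr_col_mx mul_col_row uu QQ uQ (scalar_mx_block 1 r 1).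
  by rewrite -[Q *m u^T]trmxK trmx_mul trmxK uQ trmx0.
have wE : w = Num.sqrt s *: u by rewrite /u scalerA divff // scale1r.
apply/eqmxP; rewrite -!addsmxE !addsmx_sub !addsmxSr !andbT.
apply/andP; split.
  by apply: scalemx_sub; rewrite addmx_sub_adds // eqmx_opp submxMl.
by rewrite aE; apply: addmx_sub_adds; rewrite ?submxMl // wE scalemx_sub.
Qed.

Lemma row_orthonormal_basis m n (A : 'M[R]_(m, n)) :
  exists r (Q : 'M[R]_(r, n)), Q *m Q^T = 1%:M /\ (Q :=: A)%MS.
Proof.
elim: m A => [|m IH] A.
  by exists 0%N, A; split; rewrite // [LHS]flatmx0 [RHS]flatmx0.
have [r [Q [QQ QA]]] := IH (dsubmx (A : 'M_(1 + m, n))).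
have [r' [Q' [QQ' Q'E]]] := row_orthonormal_cons (usubmx (A : 'M_(1 + m, n))) QQ.
exists r', Q'; split => //.
apply: eqmx_trans Q'E _; apply: eqmx_trans (eqmx_sym (addsmxE _ _)) _.
apply: eqmx_trans (adds_eqmx (eqmx_refl _) QA) _.
by apply: eqmx_trans (addsmxE _ _) _; rewrite vsubmxK.
Qed.

Lemma rank_row_orthonormal r n (Q : 'M[R]_(r, n)) :
  Q *m Q^T = 1%:M -> \rank Q = r.
Proof.
move=> QQ; apply/eqP; rewrite eqn_leq rank_leq_row /=.
by rewrite -{1}(mxrank1 R r) -QQ mxrankM_maxl.
Qed.

Lemma sym_idem_factor n (P : 'M[R]_n) : P^T = P -> P *m P = P ->
  exists Q : 'M[R]_(\rank P, n), Q *m Q^T = 1%:M /\ Q^T *m Q = P.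
Proof.
move=> PT PP; have [r [Q [QQ QP]]] := row_orthonormal_basis P.
have rE : r = \rank P by rewrite -(rank_row_orthonormal QQ) QP.
subst r; exists Q; split => //.
have /submxP[X PE] : (P <= Q)%MS by rewrite QP.
have /submxP[Y QE] : (Q <= P)%MS by rewrite QP.
have QPQ : Q *m P = Q by rewrite QE -mulmxA PP.
by rewrite -{1}QPQ trmx_mul PT -mulmxA {1}PE -mulmxA (mulmxA Q) QQ mul1mx -PE.
Qed.

Lemma sym_idem_trace n (P : 'M[R]_n) : P^T = P -> P *m P = P ->
  \tr P = (\rank P)%:R.
Proof.
move=> PT PP; have [Q [QQ QP]] := sym_idem_factor PT PP.
by rewrite -[in LHS]QP mxtrace_mulC QQ mxtrace1.
Qed.

End RowOrthonormal.

Lemma compress_sym_idem (R : fieldType) m n (B : 'M[R]_(m, n)) (E : 'M[R]_n) t :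
  t != 0 -> E^T = E -> E *m E = E -> E *m (B^T *m B) *m E = t *: E ->
  let X := t^-1 *: (B *m E *m B^T) in [/\ X^T = X, X *m X = X & \tr X = \tr E].
Proof.
move=> t0 ET EE EFE X; split.
- by rewrite /X linearZ /= !trmx_mul trmxK ET mulmxA.
- have BEB : B *m E *m B^T *m (B *m E *m B^T) = B *m (E *m (B^T *m B) *m E) *m B^T.
    by rewrite !mulmxA.
  rewrite /X -scalemxAl -scalemxAr BEB EFE -scalemxAr -scalemxAl !scalerA.
  by rewrite mulrAC mulVf ?mul1r.
- rewrite /X mxtraceZ mxtrace_mulC -[E in LHS]EE !mulmxA mxtrace_mulC !mulmxA.
  by rewrite -(mulmxA E) EFE mxtraceZ mulrA mulVf ?mul1r.
Qed.

Section BlockProjections.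
Variables (R : comNzRingType) (K : nat) (p_ : 'I_K -> nat).
Local Notation S := (\sum_i p_ i)%N.

Definition block_proj (i : 'I_K) : 'M[R]_S :=
  \mxdiag_j (((j == i)%:R)%:M : 'M[R]_(p_ j)).

Lemma sum_block_proj : \sum_i block_proj i = 1%:M.
Proof.
rewrite -mxdiag_sum -(mxdiagZ (p_ := p_) 1); apply: eq_mxdiag => j.
rewrite (bigD1 j) //= big1 ?addr0 ?eqxx // => i ij.
by rewrite eq_sym (negbTE ij) raddf0.
Qed.

Lemma tr_block_proj i : (block_proj i)^T = block_proj i.
Proof. by rewrite tr_mxdiag; apply: eq_mxdiag => j; rewrite tr_scalar_mx. Qed.

Lemma block_proj_idem i : block_proj i *m block_proj i = block_proj i.
Proof.
rewrite /block_proj [X in _ *m X]/mxdiag mul_mxdiag_mxblock /mxdiag.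
apply: eq_mxblock => j k; case: (eqVneq j k) => [<-|jk]; rewrite ?mulmx0 //.
by rewrite conform_mx_id -scalar_mxM; case: eqP; rewrite ?mul1r ?mul0r.
Qed.

Lemma mxtrace_block_proj i : \tr (block_proj i) = (p_ i)%:R.
Proof.
rewrite mxtrace_mxdiag (bigD1 i) //= big1 ?addr0 => [|j ji].
  by rewrite mxtrace_scalar eqxx.
by rewrite mxtrace_scalar (negbTE ji) mul0rn.
Qed.

Lemma block_proj_mxcol m (C_ : forall j, 'M[R]_(p_ j, m)) i :
  block_proj i *m \mxcol_j C_ j = \mxcol_j ((j == i)%:R *: C_ j).
Proof. by rewrite mul_mxdiag_mxcol; apply: eq_mxcol => j; rewrite mul_scalar_mx. Qed.

Lemma block_proj_mxcol_gram m (C_ : forall j, 'M[R]_(p_ j, m)) i :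
  C_ i *m (C_ i)^T = 1%:M ->
  block_proj i *m (\mxcol_j C_ j *m (\mxcol_j C_ j)^T) *m block_proj i = block_proj i.
Proof.
move=> CC; rewrite -[X in _ *m X](tr_block_proj i) mulmxA -mulmxA -trmx_mul.
rewrite block_proj_mxcol tr_mxcol mul_mxcol_mxrow /block_proj /mxdiag.
apply: eq_mxblock => j k; rewrite linearZ /= -scalemxAl -scalemxAr scalerA.
case: (eqVneq j k) => [<-|jk].
  rewrite conform_mx_id; case: eqP => [->|_]; last by rewrite mul0r scale0r raddf0.
  by rewrite mulr1 CC scalemx1.
case: (eqVneq j i) => [ji|ji]; last by rewrite mul0r scale0r.
by rewrite -ji (eq_sym k) (negbTE jk) mulr0 scale0r.
Qed.

End BlockProjections.

Section NaimarkComplement.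
Variables (R : rcfType) (K N : nat) (p_ : 'I_K -> nat) (alpha : R).
Variable Q : forall i, 'M[R]_(p_ i, N).
Hypothesis alpha_neq0 : alpha != 0.
Hypothesis alpha_neq1 : alpha != 1.
Hypothesis Q_isometry : forall i, Q i *m (Q i)^T = 1%:M.
Hypothesis Q_tight : \sum_i (Q i)^T *m Q i = alpha%:M.

Local Notation S := (\sum_i p_ i)%N.
Local Notation E := (block_proj R p_).
Let A : 'M[R]_(S, N) := \mxcol_i Q i.
Let F : 'M[R]_S := 1%:M - alpha^-1 *: (A *m A^T).

Lemma frame_gram : A^T *m A = alpha%:M.
Proof. by rewrite tr_mxcol mul_mxrow_mxcol Q_tight. Qed.

Lemma frame_compl_sym : F^T = F.
Proof. by rewrite /F linearB /= tr_scalar_mx linearZ /= trmx_mul trmxK. Qed.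

Lemma frame_compl_idem : F *m F = F.
Proof.
have G2 : alpha^-1 *: (A *m A^T) *m (alpha^-1 *: (A *m A^T)) = alpha^-1 *: (A *m A^T).
  rewrite -scalemxAl -scalemxAr scalerA -mulmxA (mulmxA A^T) frame_gram.
  by rewrite mul_scalar_mx -scalemxAr scalerA -mulrA mulVf // mulr1.
by rewrite /F mulmxBl !mulmxBr !mulmx1 !mul1mx G2 subrr subr0.
Qed.

Lemma rank_frame_compl : \rank F = (S - N)%N.
Proof.
have trF : \tr F = S%:R - N%:R.
  rewrite /F linearB /= mxtrace1 mxtraceZ mxtrace_mulC frame_gram mxtrace_scalar.
  by rewrite mulrnAr mulVf.
have rankF : (\rank F + N)%N = S.
  apply/eqP; rewrite -(eqr_nat R) natrD -sym_idem_trace.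
  - by rewrite trF subrK.
  - exact: frame_compl_sym.
  - exact: frame_compl_idem.
have NS : (N <= S)%N by rewrite -[leqRHS]rankF leq_addl.
by apply/eqP; rewrite -(eqn_add2r N) subnK // rankF.
Qed.

Lemma block_proj_frame_compl i : E i *m F *m E i = (1 - alpha^-1) *: E i.
Proof.
rewrite /F mulmxBr mulmxBl mulmx1 block_proj_idem -scalemxAr -scalemxAl.
by rewrite block_proj_mxcol_gram // scalerBl scale1r.
Qed.

Lemma naimark_complement_isometries :
  exists P' : 'I_K -> 'M[R]_(S - N),
    (forall i, [/\ (P' i)^T = P' i, P' i *m P' i = P' i & \rank (P' i) = p_ i])
    /\ \sum_i P' i = (alpha / (alpha - 1))%:M.
Proof.
have [B [BB BF]] := sym_idem_factor frame_compl_sym frame_compl_idem.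
rewrite -rank_frame_compl; set t := 1 - alpha^-1.
have t_neq0 : t != 0 by rewrite subr_eq0 eq_sym invr_eq1.
exists (fun i => t^-1 *: (B *m E i *m B^T)); split => [i|].
  have EFE : E i *m (B^T *m B) *m E i = t *: E i by rewrite BF block_proj_frame_compl.
  have [PT PP trP] :=
    compress_sym_idem t_neq0 (tr_block_proj _ _ i) (block_proj_idem _ _ i) EFE.
  split => //; apply/eqP; rewrite -(eqr_nat R) -sym_idem_trace //.
  by rewrite trP mxtrace_block_proj.
rewrite -scaler_sumr -mulmx_suml -mulmx_sumr sum_block_proj mulmx1 BB scalemx1.
by congr (_%:M); rewrite /t; field; rewrite alpha_neq0 subr_eq0 alpha_neq1.
Qed.

End NaimarkComplement.

Lemma naimark_complement (R : rcfType) K N (alpha : R) (P : 'I_K -> 'M[R]_N) :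
  alpha != 0 -> alpha != 1 ->
  (forall i, (P i)^T = P i /\ P i *m P i = P i) -> \sum_i P i = alpha%:M ->
  exists P' : 'I_K -> 'M[R]_(\sum_i \rank (P i) - N),
    (forall i, [/\ (P' i)^T = P' i, P' i *m P' i = P' i & \rank (P' i) = \rank (P i)])
    /\ \sum_i P' i = (alpha / (alpha - 1))%:M.
Proof.
move=> alpha_neq0 alpha_neq1 P_proj sumP.
have Q_ex i : exists Q : 'M[R]_(\rank (P i), N), (Q *m Q^T == 1%:M) && (Q^T *m Q == P i).
  have [PT PP] := P_proj i; have [Q [QQ QP]] := sym_idem_factor PT PP.
  by exists Q; rewrite QQ QP !eqxx.
have [Q QP] := all_sig (fun i => sigW (Q_ex i)).
apply: (naimark_complement_isometries alpha_neq0 alpha_neq1 (Q := Q)).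
- by move=> i; have /andP[/eqP] := QP i.
- by rewrite -sumP; apply: eq_bigr => i _; have /andP[_ /eqP] := QP i.
Qed.

Theorem theorem2p6 (R : realType) (N : nat) (alpha : R) (L : seq nat) :
  (0 < N)%N -> 1 < alpha -> TFF alpha N L ->
  TFF (alpha / (alpha - 1)) (sumn L - N)%N L.
Proof.
move=> _ alpha_gt1 [L_sorted [L_pos [P [P_proj sumP]]]]; do 2!split => //.
have alpha_neq0 : alpha != 0 by rewrite gt_eqF // (lt_trans ltr01).
have alpha_neq1 : alpha != 1 by rewrite gt_eqF.
have [|P' [P'_proj sumP']] := naimark_complement alpha_neq0 alpha_neq1 _ sumP.
  by move=> i; have [] := P_proj i.
have rankE i : \rank (P i) = nth 0%N L i by have [] := P_proj i.
have sumE : (\sum_i \rank (P i))%N = sumn L.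
  by rewrite (eq_bigr _ (fun i _ => rankE i)) sumnE (big_nth 0%N) big_mkord.
move: P' P'_proj sumP'; rewrite sumE => P' P'_proj sumP'.
by exists P'; split => // i; have [PT PP ->] := P'_proj i; rewrite rankE.
Qed.
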